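(* Let $n\ge2$ and let $\phi_1(x),\dots,\phi_n(x)$ be functions of $x$. Let $J=J_{n+1}$ be the $(n+1)\times(n+1)$ matrix, with rows and columns indexed $0,\dots,n$, whose only nonzero entries are $J_{k,n-k}=(-1)^k$ (so $XJY^T=\sum_{k=0}^n(-1)^kx_ky_{n-k}$). For $0\le i\le n$ define the vector of $n+1$ functions $$\delta_i\tilde F(x)=(\underbrace{0,\dots,0}_{i},1,\mathcal I(i+1),\mathcal I(i+1,i+2),\dots,\mathcal I(i+1,i+2,\dots,n)),$$ so $\delta_0\tilde F=\tilde F=(1,\mathcal I(1),\mathcal I(1,2),\dots,\mathcal I(1,\dots,n))$. Let $s(a)=n+1-a$ for $1\le a\le n$, and let $s$ act on iterated integrals by $s\,\mathcal I(a_1\cdots a_m)=\mathcal I(s(a_1)\cdots s(a_m))$ and componentwise on vectors of iterated integrals (fixing constants). Then for $0\le i,j\le n$, $$(\delta_i\tilde F)J(s\delta_j\tilde F)^T=0\ \text{ if } i+j\ne n,\qquad (\delta_i\tilde F)J(s\delta_j\tilde F)^T=(-1)^i\ \text{ if } i+j=n.$$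
   Context: Iterated integrals: $\mathcal I(a_1\cdots a_k)(x)=\int_0^x\phi_{a_1}(x_1)\,dx_1\int_0^{x_1}\phi_{a_2}(x_2)\,dx_2\cdots\int_0^{x_{k-1}}\phi_{a_k}(x_k)\,dx_k$ with $\mathcal I(\varnothing)=1$. *)

From Stdlib Require Import Reals List Arith.
From Coquelicot Require Import Coquelicot.
Open Scope R_scope.

Fixpoint II (phi : nat -> R -> R) (w : list nat) (x : R) : R :=
  match w with
  | nil => 1
  | a :: w' => RInt (fun t => phi a t * II phi w' t) 0 x
  end.

Definition delta_word (i k : nat) : list nat :=
  map (fun m => (i + 1 + m)%nat) (seq 0 (k - i)).

(* k-th component (k = 0..n) of delta_i F~ :
   0 for k < i, 1 for k = i, I(i+1,...,k) for k > i. *)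
Definition deltaF (phi : nat -> R -> R) (i k : nat) (x : R) : R :=
  if (k <? i)%nat then 0 else II phi (delta_word i k) x.

Definition s_act (n a : nat) : nat := (n + 1 - a)%nat.

(* k-th component of s(delta_j F~): s acts on each iterated integral,
   fixing constants. *)
Definition s_deltaF (phi : nat -> R -> R) (n j k : nat) (x : R) : R :=
  if (k <? j)%nat then 0 else II phi (map (s_act n) (delta_word j k)) x.

Definition Jmat (n k l : nat) : R :=
  if Nat.eqb l (n - k) then (-1) ^ k else 0.

Definition bilinJ (n : nat) (X Y : nat -> R) : R :=
  sum_f_R0 (fun k => sum_f_R0 (fun l => X k * Jmat n k l * Y l) n) n.

(* The k-th term of the form is (-1)^k I(i+1 ... k) I(n-j ... k+1), so the form equals
   the alternating deconcatenation sum of the word i+1 ... n-j against its reversal,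
   which is 1 for the empty word and 0 otherwise (the antipode relation of iterated
   integrals).  For a nonempty word the sum vanishes at 0, and the Leibniz rule makes
   its derivative a combination of the sums of the two words shortened by one letter,
   so induction on the length shows that it is identically 0. *)

From Stdlib Require Import Reals List Lia Lra.
From Coquelicot Require Import Coquelicot.
Open Scope R_scope.

Lemma sum_f_R0_shift (g : nat -> R) (a N : nat) :
  (a <= N)%nat -> (forall k, (k < a)%nat -> g k = 0) ->
  sum_f_R0 g N = sum_f_R0 (fun t => g (a + t)%nat) (N - a).
Proof.
  revert g N; induction a as [|a IH]; intros g N Ha Hg.
  - now rewrite Nat.sub_0_r.
  - rewrite decomp_sum, Hg, Rplus_0_l by lia.
    rewrite (IH (fun k => g (S k))) by (lia || (intros; apply Hg; lia)).
    replace (pred N - a)%nat with (N - S a)%nat by lia.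
    apply sum_eq; intros t _; f_equal; lia.
Qed.

Lemma sum_f_R0_trunc (g : nat -> R) (L N : nat) :
  (L <= N)%nat -> (forall t, (L < t <= N)%nat -> g t = 0) ->
  sum_f_R0 g N = sum_f_R0 g L.
Proof.
  induction N as [|N IH]; intros HL Hg.
  - now replace L with 0%nat by lia.
  - destruct (Nat.eq_dec L (S N)) as [->|HLN]; [reflexivity|].
    simpl; rewrite IH, (Hg (S N)) by (lia || (intros; apply Hg; lia)); ring.
Qed.

Lemma sum_f_R0_support (g : nat -> R) (a b N : nat) :
  (a <= b <= N)%nat -> (forall k, (k <= N)%nat -> (k < a \/ b < k)%nat -> g k = 0) ->
  sum_f_R0 g N = sum_f_R0 (fun t => g (a + t)%nat) (b - a).
Proof.
  intros Hab Hg.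
  rewrite (sum_f_R0_trunc g b N), (sum_f_R0_shift g a b) by (lia || (intros; apply Hg; lia)).
  reflexivity.
Qed.

Lemma is_derive_sum_f_R0 (f : nat -> R -> R) (df : nat -> R) (N : nat) (x : R) :
  (forall k, (k <= N)%nat -> is_derive (f k) x (df k)) ->
  is_derive (fun y => sum_f_R0 (fun k => f k y) N) x (sum_f_R0 df N).
Proof.
  intros Hf; rewrite <- sum_n_Reals.
  apply (is_derive_ext (fun y => sum_n (fun k => f k y) N)).
  - intros y; apply sum_n_Reals.
  - exact (is_derive_sum_n (K := R_AbsRing) (V := R_NormedModule) f N x df Hf).
Qed.

Lemma is_derive_RInt_0 (f : R -> R) (x : R) :
  (forall t, continuous f t) -> is_derive (fun y => RInt f 0 y) x (f x).
Proof.
  intros Hf; apply (is_derive_RInt f _ 0 x).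
  - apply filter_forall; intros y.
    apply (RInt_correct (V := R_CompleteNormedModule)), ex_RInt_continuous.
    intros z _; apply Hf.
  - apply Hf.
Qed.

Lemma is_derive_0_const (f : R -> R) :
  (forall y, is_derive f y 0) -> forall x, f x = f 0.
Proof.
  intros Hf x.
  assert (Hint := is_RInt_derive f (fun _ => 0) 0 x (fun y _ => Hf y)
    (fun y _ => continuous_const (U := R_UniformSpace) (V := R_UniformSpace) 0 y)).
  apply (is_RInt_unique (V := R_CompleteNormedModule)) in Hint.
  rewrite (RInt_const (V := R_CompleteNormedModule)) in Hint.
  unfold minus, plus, opp, scal in Hint; simpl in Hint; unfold mult in Hint; simpl in Hint.
  lra.
Qed.

Section IteratedIntegrals.

Variable phi : nat -> R -> R.

Definition II_deriv (w : list nat) (x : R) : R :=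
  match w with nil => 0 | a :: w' => phi a x * II phi w' x end.

Lemma II_cons_0 (a : nat) (w : list nat) : II phi (a :: w) 0 = 0.
Proof. apply (RInt_point (V := R_CompleteNormedModule)). Qed.

Definition letters_continuous (w : list nat) : Prop :=
  List.Forall (fun a => forall t, continuous (phi a) t) w.

Lemma continuous_II (w : list nat) (x : R) :
  letters_continuous w -> continuous (II phi w) x.
Proof.
  intros Hw; revert x; induction Hw as [|a w' Ha _ IH]; intros x.
  - apply continuous_const.
  - apply (ex_derive_continuous (V := R_NormedModule)); eexists.
    apply is_derive_RInt_0; intros t.
    apply (continuous_mult (K := R_AbsRing)); [apply Ha | apply IH].
Qed.

Lemma is_derive_II (w : list nat) (x : R) :
  letters_continuous w -> is_derive (II phi w) x (II_deriv w x).
Proof.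
  intros Hw; destruct Hw as [|a w' Ha Hw']; simpl.
  - apply (is_derive_const (V := R_NormedModule)).
  - apply (is_derive_RInt_0 (fun t => phi a t * II phi w' t)); intros t.
    apply (continuous_mult (K := R_AbsRing)); [apply Ha | now apply continuous_II].
Qed.

End IteratedIntegrals.

Definition down_word (k b : nat) : list nat := map (fun m => (b - m)%nat) (seq 0 (b - k)).

Lemma delta_word_diag (a : nat) : delta_word a a = nil.
Proof. unfold delta_word; now rewrite Nat.sub_diag. Qed.

Lemma down_word_diag (b : nat) : down_word b b = nil.
Proof. unfold down_word; now rewrite Nat.sub_diag. Qed.

Lemma delta_word_cons (a k : nat) : (a < k)%nat -> delta_word a k = S a :: delta_word (S a) k.
Proof.
  intros Hak; unfold delta_word.
  replace (k - a)%nat with (S (k - S a)) by lia; simpl.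
  rewrite <- seq_shift, map_map; f_equal; [lia | apply map_ext; intros; lia].
Qed.

Lemma down_word_cons (k b : nat) : (k <= b)%nat -> down_word k (S b) = S b :: down_word k b.
Proof.
  intros Hkb; unfold down_word.
  replace (S b - k)%nat with (S (b - k)) by lia; simpl.
  rewrite <- seq_shift, map_map; f_equal; apply map_ext; intros; lia.
Qed.

Lemma in_delta_word (a k c : nat) : In c (delta_word a k) -> (a < c <= k)%nat.
Proof.
  unfold delta_word; intros [m [<- Hm]]%in_map_iff; apply in_seq in Hm; lia.
Qed.

Lemma in_down_word (k b c : nat) : In c (down_word k b) -> (k < c <= b)%nat.
Proof.
  unfold down_word; intros [m [<- Hm]]%in_map_iff; apply in_seq in Hm; lia.
Qed.

Lemma map_s_act_delta_word (n j k : nat) :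
  map (s_act n) (delta_word j (n - k)) = down_word k (n - j).
Proof.
  unfold delta_word, down_word, s_act; rewrite map_map.
  replace (n - k - j)%nat with (n - j - k)%nat by lia.
  apply map_ext; intros; lia.
Qed.

Section AntipodeSum.

Variable phi : nat -> R -> R.

Definition antipode_sum (a b : nat) (x : R) : R :=
  sum_f_R0 (fun t => (-1) ^ (a + t) *
    (II phi (delta_word a (a + t)) x * II phi (down_word (a + t) b) x)) (b - a).

Lemma antipode_sum_diag (a : nat) (x : R) : antipode_sum a a x = (-1) ^ a.
Proof.
  unfold antipode_sum; rewrite Nat.sub_diag; simpl.
  rewrite Nat.add_0_r, delta_word_diag, down_word_diag; simpl; ring.
Qed.

Lemma antipode_sum_at_0 (a b : nat) : (a < b)%nat -> antipode_sum a b 0 = 0.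
Proof.
  intros Hab; unfold antipode_sum; apply sum_eq_R0; intros [|t] Ht.
  - rewrite Nat.add_0_r.
    destruct b as [|b]; [lia|].
    rewrite down_word_cons, II_cons_0 by lia; ring.
  - rewrite delta_word_cons, II_cons_0 by lia; ring.
Qed.

Lemma is_derive_antipode_sum (a b : nat) (x : R) :
  (a <= b)%nat -> (forall c, (a < c <= S b)%nat -> forall t, continuous (phi c) t) ->
  is_derive (antipode_sum a (S b)) x
    (phi (S a) x * antipode_sum (S a) (S b) x + phi (S b) x * antipode_sum a b x).
Proof.
  intros Hab Hphi.
  set (U t := delta_word a (a + t)); set (V t := down_word (a + t) (S b)).
  assert (Hd : is_derive (antipode_sum a (S b)) x (sum_f_R0 (fun t =>
      (-1) ^ (a + t) * (II_deriv phi (U t) x * II phi (V t) x)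
    + (-1) ^ (a + t) * (II phi (U t) x * II_deriv phi (V t) x)) (S b - a))).
  { apply is_derive_sum_f_R0; intros t Ht.
    rewrite <- Rmult_plus_distr_l; apply is_derive_scal.
    apply (is_derive_mult (K := R_AbsRing)); [| | intros; apply Rmult_comm];
      apply is_derive_II, List.Forall_forall; intros c Hc; apply Hphi.
    - apply in_delta_word in Hc; lia.
    - apply in_down_word in Hc; lia. }
  (* The empty word has derivative 0, which kills one boundary term of each sum. *)
  rewrite sum_plus in Hd; replace (S b - a)%nat with (S (b - a)) in Hd by lia.
  replace (sum_f_R0 _ (S (b - a))) with (phi (S a) x * antipode_sum (S a) (S b) x) in Hd.
  2:{ unfold antipode_sum; rewrite scal_sum, (decomp_sum _ (S (b - a))) by lia; simpl pred.
      unfold U; rewrite Nat.add_0_r, delta_word_diag, Rmult_0_l, Rmult_0_r, Rplus_0_l.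
      replace (S b - S a)%nat with (b - a)%nat by lia.
      apply sum_eq; intros t Ht.
      rewrite (delta_word_cons a) by lia; simpl II_deriv.
      unfold V; replace (a + S t)%nat with (S a + t)%nat by lia; ring. }
  replace (sum_f_R0 _ (S (b - a))) with (phi (S b) x * antipode_sum a b x) in Hd.
  2:{ unfold antipode_sum; rewrite scal_sum; simpl sum_f_R0 at 2.
      unfold V; replace (a + S (b - a))%nat with (S b) by lia.
      rewrite down_word_diag, Rmult_0_r, Rmult_0_r, Rplus_0_r.
      apply sum_eq; intros t Ht.
      rewrite down_word_cons by lia; simpl II_deriv; unfold U; ring. }
  exact Hd.
Qed.

Lemma antipode_sum_eq0 (a b : nat) (x : R) :
  (a < b)%nat -> (forall c, (a < c <= b)%nat -> forall t, continuous (phi c) t) ->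
  antipode_sum a b x = 0.
Proof.
  intros Hab; remember (b - a)%nat as d eqn:Ed; revert a b x Hab Ed.
  induction d as [|d IH]; intros a b x Hab Ed Hphi; [lia|].
  destruct b as [|b]; [lia|].
  assert (Hderiv0 : forall y, is_derive (antipode_sum a (S b)) y 0).
  { intros y.
    replace 0 with (phi (S a) y * antipode_sum (S a) (S b) y + phi (S b) y * antipode_sum a b y).
    - apply is_derive_antipode_sum; [lia | exact Hphi].
    - destruct (Nat.eq_dec a b) as [<-|Hne].
      + rewrite !antipode_sum_diag; simpl; ring.
      + rewrite (IH (S a) (S b)), (IH a b) by (lia || (intros; apply Hphi; lia)); ring. }
  now rewrite (is_derive_0_const _ Hderiv0), antipode_sum_at_0 by lia.
Qed.

End AntipodeSum.

Lemma bilinJ_antidiagonal (n : nat) (X Y : nat -> R) :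
  bilinJ n X Y = sum_f_R0 (fun k => X k * (-1) ^ k * Y (n - k)%nat) n.
Proof.
  unfold bilinJ; apply sum_eq; intros k Hk.
  rewrite (sum_f_R0_support _ (n - k) (n - k) n).
  - rewrite Nat.sub_diag; simpl; unfold Jmat; now rewrite Nat.add_0_r, Nat.eqb_refl.
  - lia.
  - intros l _ Hl; unfold Jmat; rewrite (proj2 (Nat.eqb_neq l (n - k))) by lia; ring.
Qed.

Lemma deltaF_s_deltaF_disjoint (phi : nat -> R -> R) (n i j k : nat) (x : R) :
  (k < i \/ n - k < j)%nat ->
  deltaF phi i k x * (-1) ^ k * s_deltaF phi n j (n - k) x = 0.
Proof.
  unfold deltaF, s_deltaF; intros Hk.
  destruct (Nat.ltb_spec k i), (Nat.ltb_spec (n - k) j); try ring; lia.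
Qed.

Lemma bilinJ_deltaF (n : nat) (phi : nat -> R -> R) (i j : nat) (x : R) :
  (i + j <= n)%nat ->
  bilinJ n (fun k => deltaF phi i k x) (fun k => s_deltaF phi n j k x)
  = antipode_sum phi i (n - j) x.
Proof.
  intros Hij; rewrite bilinJ_antidiagonal, (sum_f_R0_support _ i (n - j) n).
  - apply sum_eq; intros t Ht; unfold deltaF, s_deltaF.
    rewrite (proj2 (Nat.ltb_ge (i + t) i)), (proj2 (Nat.ltb_ge (n - (i + t)) j)) by lia.
    rewrite map_s_act_delta_word; ring.
  - lia.
  - intros k Hk Hout; apply deltaF_s_deltaF_disjoint; lia.
Qed.

Theorem proposition5p5 (n : nat) (phi : nat -> R -> R)
  (Hn : (2 <= n)%nat)
  (Hphi : forall a : nat, (1 <= a <= n)%nat -> forall t : R, continuous (phi a) t)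
  (i j : nat) (Hi : (i <= n)%nat) (Hj : (j <= n)%nat) (x : R) :
  bilinJ n (fun k => deltaF phi i k x) (fun k => s_deltaF phi n j k x)
  = if Nat.eqb (i + j) n then (-1) ^ i else 0.
Proof.
  destruct (Nat.eqb_spec (i + j) n) as [Hij|Hij].
  - rewrite bilinJ_deltaF by lia.
    replace (n - j)%nat with i by lia; apply antipode_sum_diag.
  - destruct (Nat.le_gt_cases (i + j) n) as [Hle|Hgt].
    + rewrite bilinJ_deltaF by lia.
      apply antipode_sum_eq0; [lia | intros c Hc; apply Hphi; lia].
    + rewrite bilinJ_antidiagonal; apply sum_eq_R0; intros k Hk.
      apply deltaF_s_deltaF_disjoint; lia.
Qed.
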